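(* Suppose $F$ is symmetric around $1/2$, i.e., $F(y)=1-F(1-y)$ for all $y\in[0,1]$, and $|M|\ge4$. Then there exists $x\in(0,1/2)$ such that the strategy $\sigma_{\mathrm{ex}}(x)$ described below is a symmetric Bayesian Nash equilibrium strategy of the coordination game with two rounds of communication. Strategy $\sigma_{\mathrm{ex}}(x)$, using designated distinct messages $e,m_L,m_R$ and four further messages for a random bit (any other message is interpreted as a fixed designated message): Round 1: a type $u$ sends $e$ if $u\le x$ or $u>1-x$; $m_L$ if $x<u\le1/2$; $m_R$ if $1/2<u\le1-x$. After round-1 pair $(m_L,m_L)$: both play $L$. After $(m_R,m_R)$: both play $R$. After $(m_L,m_R)$ (either order): in round 2 each player sends an independent uniformly random bit, and both play $L$ if the bits differ and $R$ if they are equal. After $(e,m_L)$ or $(e,m_R)$ (either order): in round 2 the $e$-sender sends $m_L$ if her type is $\le1/2$ and $m_R$ otherwise, while the moderate sender repeats her round-1 message; the $e$-sender then plays $L$ iff her type is $\le1/2$, and the $m_L$-sender (resp. $m_R$-sender) plays $L$ iff the $e$-sender's round-2 message is $m_L$ (resp. plays $R$ iff it is $m_R$), so that both coordinate on the $e$-sender's preferred action. After $(e,e)$: round-2 messages are irrelevant and each player plays $L$ iff her type is $\le1/2$.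
   Context: Two players; types drawn independently from a distribution on $[0,1]$ with continuous CDF $F$ and density $f>0$ on $[0,1]$. Each chooses $L$ or $R$; a player of type $u$ gets $1-u$ if both choose $L$, $u$ if both choose $R$, and $0$ otherwise. Coordination game with two rounds of communication: after learning types, players simultaneously send publicly observed costless messages from a finite set $M$ in round 1, observe them, then simultaneously send messages from $M$ in round 2 (which may depend on own type and round-1 messages), observe them, and then choose actions (which may depend on own type and all messages). A symmetric strategy is a Bayesian Nash equilibrium strategy if, when the opponent uses it, no type of a player can obtain a strictly higher expected payoff by any other (message and action) behavior. *)

From mathcomp Require Import all_boot all_order all_algebra.
From mathcomp Require Import all_classical all_reals all_analysis.
Import Order.TTheory GRing.Theory Num.Theory.

Set Implicit Arguments.
Unset Strict Implicit.
Unset Printing Implicit Defensive.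

Local Open Scope classical_set_scope.
Local Open Scope ring_scope.

Section CoordGame.
Variables (R : realType) (M : finType).

(* payoff of a player of type u: 1-u if both play L, u if both play R, else 0;
   a boolean action "true" means L *)
Definition pay (u : R) (myL oppL : bool) : R :=
  if myL && oppL then 1 - u else if ~~ myL && ~~ oppL then u else 0.

Definition avg (g : bool -> R) : R := (g false + g true) / 2.

Variables (x : R) (e mL mR b0 b1 d : M).

Definition sig1 (v : R) : M :=
  if (v <= x) || (1 - x < v) then e else if v <= 1 / 2 then mL else mR.

Definition interp (m : M) : M := if m \in [:: e; mL; mR] then m else d.

(* round-2 message of a type v, given own round-1 message a, the (interpreted)
   opponent round-1 message b, and own random bit r *)
Definition sig2 (v : R) (a b : M) (r : bool) : M :=
  if a == e then (if b == e then e else if v <= 1 / 2 then mL else mR)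
  else if b == e then a
  else if a == b then a
  else (if r then b1 else b0).

(* action (true = L) of a type v, given own round-1 message a, interpreted
   opponent round-1 message b, own random bit r, opponent round-2 message m2 *)
Definition sigA (v : R) (a b : M) (r : bool) (m2 : M) : bool :=
  if a == e then v <= 1 / 2
  else if b == e then (if a == mL then m2 == mL else m2 != mR)
  else if a == b then a == mL
  else r (+) (m2 == b1).

(* payoff of type u against type v when both follow sigma_ex(x),
   averaged over both players' random bits *)
Definition eq_outcome (u v : R) : R :=
  avg (fun r => avg (fun r' =>
    let a := sig1 u in let b := sig1 v in
    let ma := sig2 u a (interp b) r in
    let mb := sig2 v b (interp a) r' in
    pay u (sigA u a (interp b) r mb) (sigA v b (interp a) r' ma))).

(* payoff of type u, using the (pure) behavior (m1, r2, act), against type v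
   following sigma_ex(x), averaged over the opponent's random bit:
   m1 = own round-1 message, r2 n1 = own round-2 message after opponent's
   round-1 message n1, act n1 m2 n2 = own action (true = L). *)
Definition dev_outcome (u : R) (m1 : M) (r2 : M -> M) (act : M -> M -> M -> bool)
    (v : R) : R :=
  avg (fun r' =>
    let n1 := sig1 v in
    let b := interp m1 in
    let m2 := r2 n1 in
    let n2 := sig2 v n1 b r' in
    pay u (act n1 m2 n2) (sigA v n1 b r' m2)).

End CoordGame.

(* expectation over the opponent's type, distributed on [0,1] with density f *)
Definition EU (R : realType) (f : R -> R) (g : R -> R) : \bar R :=
  (\int[@lebesgue_measure R]_(v in `[0%R, 1%R]) (g v * f v)%:E)%E.

Definition density_cdf (R : realType) (f : R -> R) (y : R) : R :=
  fine (\int[@lebesgue_measure R]_(t in `[0%R, y]) (f t)%:E)%E.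

Definition sigma_ex_BNE (R : realType) (M : finType) (f : R -> R) (x : R)
    (e mL mR b0 b1 d : M) : Prop :=
  forall u : R, 0 <= u <= 1 ->
  forall (m1 : M) (r2 : M -> M) (act : M -> M -> M -> bool),
    (EU f (dev_outcome x e mL mR b0 b1 d u m1 r2 act)
       <= EU f (eq_outcome x e mL mR b0 b1 d u))%E.

(* Fix 0 < x < 1/2. Under sigma_ex(x) a player's round-1 message, hence her
   whole behavior, depends on her type only through its region: extreme-left
   [0, x], moderate-left ]x, 1/2], moderate-right ]1/2, 1 - x], extreme-right
   ]1 - x, 1].  So every expected payoff is a finite average of four values
   weighted by the region masses (EU_regions).  Choosing the cutoff by
   x + F x = 1/2 (intermediate value theorem, exists_cutoff) and using the
   symmetry of F, the masses become 1/2 - x, x, x, 1/2 - x (EU_region_avg).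

   The game-theoretic part compares these averages: whatever a type u does,
   its payoff is at most the value msg_value u m of the message m it is read
   as sending (dev_value_le); playing sigma_ex(x) attains exactly the value of
   its own message (eq_value); and, because of the choice of the cutoff, its
   own message has the largest value (sig1_optimal). *)

From mathcomp Require Import all_boot all_order all_algebra.
From mathcomp Require Import all_classical all_reals all_analysis.
From mathcomp Require Import measurable_realfun lra.
Import Order.TTheory GRing.Theory Num.Theory.
Set Implicit Arguments.
Unset Strict Implicit.
Local Open Scope classical_set_scope.
Local Open Scope ring_scope.

Local Notation mu := (@lebesgue_measure _).

Lemma itv_cc_split (R : realType) (c a b : R) : c <= a <= b ->
  [set` `[c, b]] = [set` `[c, a]] `|` [set` `]a, b]] :> set R.
Proof. by case/andP=> ca ab; apply: itv_bndbnd_setU; rewrite bnd_simp. Qed.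

Lemma itv_cc_oc_disj (R : realType) (c a b : R) :
  disj_set [set` `[c, a]] [set` `]a, b]].
Proof.
apply/disj_setPS => t [] /=; rewrite !in_itv /= => /andP[_ ta] /andP[at' _].
by move: (lt_le_trans at' ta); rewrite ltxx.
Qed.

Lemma measurable_fun_itv_split (R : realType) (c a b : R) (h : R -> \bar R) :
  c <= a <= b -> measurable_fun (`[c, a] : set R) h -> measurable_fun (`]a, b] : set R) h ->
  measurable_fun (`[c, b] : set R) h.
Proof. by move=> cab mh1 mh2; rewrite (itv_cc_split cab); apply/measurable_funU. Qed.

Lemma integral_itv_split (R : realType) (c a b : R) (h : R -> \bar R) :
  c <= a <= b -> measurable_fun (`[c, b] : set R) h ->
  (\int[mu]_(t in `[c, b]) h t
   = \int[mu]_(t in `[c, a]) h t + \int[mu]_(t in `]a, b]) h t)%E.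
Proof.
move=> cab mh; rewrite (itv_cc_split cab); apply: integral_setU => //.
- by rewrite -(itv_cc_split cab).
- exact: itv_cc_oc_disj.
Qed.

Lemma measurable_fun_step (R : realType) (A : set R) (g f : R -> R) (c : R) :
  measurable A -> measurable_fun A f -> (forall t, A t -> g t = c) ->
  measurable_fun A (fun t => (g t * f t)%:E).
Proof.
move=> mA mf gc; apply/measurable_EFinP.
have mcf : measurable_fun A (fun t => c * f t) by apply: measurable_funM.
by apply: eq_measurable_fun mcf => t; rewrite inE => /gc ->.
Qed.

Lemma integral_step (R : realType) (A : set R) (g f : R -> R) (c : R) :
  measurable A -> measurable_fun A f -> 0 <= c -> (forall t, A t -> 0 <= f t) ->
  (forall t, A t -> g t = c) ->
  (\int[mu]_(t in A) (g t * f t)%:E = c%:E * \int[mu]_(t in A) (f t)%:E)%E.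
Proof.
move=> mA mf c0 f0 gc.
rewrite -ge0_integralZl_EFin //; last exact/measurable_EFinP.
by apply: eq_integral => t; rewrite inE => /gc ->.
Qed.

(* the probability-weighted value of a region-constant g when the extreme
   regions have mass 1/2 - x and the moderate regions have mass x *)
Definition region_avg (R : realType) (x : R) (g : R -> R) : R :=
  (1 / 2 - x) * (g 0 + g 1) + x * (g (1 / 2) + g (1 - x)).

(* g takes a single value on each of the four regions
   [0, x], ]x, 1/2], ]1/2, 1 - x], ]1 - x, 1] of types *)
Definition region_const (R : realType) (x : R) (g : R -> R) : Prop :=
  forall v w : R, (v <= x) = (w <= x) -> (1 - x < v) = (1 - x < w) ->
  (v <= 1 / 2) = (w <= 1 / 2) -> g v = g w.

Section Density.
Variables (R : realType) (f : R -> R).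
Hypotheses (mf : measurable_fun (`[0%R, 1%R] : set R) f)
  (fpos : forall t : R, 0 <= t <= 1 -> 0 < f t)
  (f1 : (\int[mu]_(t in `[0%R, 1%R]) (f t)%:E)%E = 1%E).

Local Notation F := (density_cdf f).

Lemma density_ge0 (A : set R) : A `<=` [set` `[0%R, 1%R]] -> forall t, A t -> 0 <= f t.
Proof. by move=> A01 t /A01; rewrite /= in_itv /= => /fpos/ltW. Qed.

Lemma integral_density_fin (A : set R) : measurable A -> A `<=` [set` `[0%R, 1%R]] ->
  (\int[mu]_(t in A) (f t)%:E)%E = (fine (\int[mu]_(t in A) (f t)%:E))%:E.
Proof.
move=> mA A01; have f0 := density_ge0 A01.
rewrite fineK // ge0_fin_numE; last by apply: integral_ge0 => t /f0; rewrite lee_fin.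
rewrite (le_lt_trans _ (ltey 1)) // -f1; apply: ge0_subset_integral => //.
- exact/measurable_EFinP.
- by move=> t /(density_ge0 (@subset_refl _ _)); rewrite lee_fin.
Qed.

Lemma integral_density_cc (b : R) : 0 <= b <= 1 ->
  (\int[mu]_(t in `[0%R, b]) (f t)%:E)%E = (F b)%:E.
Proof.
case/andP=> _ b1; apply: integral_density_fin => //.
by apply: subset_itvScc; rewrite bnd_simp.
Qed.

Lemma integral_density_oc (a b : R) : 0 <= a -> a <= b -> b <= 1 ->
  (\int[mu]_(t in `]a, b]) (f t)%:E)%E = (F b - F a)%:E.
Proof.
move=> a0 ab b1.
have sub : [set` `]a, b]] `<=` [set` `[0%R, 1%R]] by apply: subset_itvScc; rewrite bnd_simp.
have mfb : measurable_fun (`[0, b] : set R) (EFin \o f).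
  by apply/measurable_EFinP; apply: measurable_funS mf => //; apply: subset_itvScc; rewrite bnd_simp.
have a0b : 0 <= a <= b by rewrite a0 ab.
have split := integral_itv_split a0b mfb.
rewrite !integral_density_cc in split; try by apply/andP; split; lra.
rewrite (integral_density_fin _ sub) // -EFinD in split.
case: split => ->; rewrite (integral_density_fin _ sub) //; congr EFin; lra.
Qed.

Lemma integral_density_step (l r : itv_bound R) (g : R -> R) (c : R) :
  (forall t, [set` Interval l r] t -> g t = c) ->
  (BLeft 0 <= l)%O -> (r <= BRight 1)%O -> 0 <= c ->
  measurable_fun [set` Interval l r] (fun t => (g t * f t)%:E) /\
  (\int[mu]_(t in [set` Interval l r]) (g t * f t)%:E
    = c%:E * \int[mu]_(t in [set` Interval l r]) (f t)%:E)%E.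
Proof.
move=> gc l0 r1 c0; have sub := subset_itvScc l0 r1.
have mfI : measurable_fun [set` Interval l r] f.
  exact: measurable_funS mf.
split; first exact: measurable_fun_step gc.
by apply: integral_step => //; exact: density_ge0.
Qed.

Lemma cdf_one : F 1 = 1.
Proof. by rewrite /density_cdf f1. Qed.

Lemma EU_regions (x : R) (g : R -> R) : 0 < x < 1 / 2 -> region_const x g ->
  (forall v, 0 <= g v) ->
  EU f g = (g 0 * F x + g (1 / 2) * (F (1 / 2) - F x)
            + g (1 - x) * (F (1 - x) - F (1 / 2)) + g 1 * (1 - F (1 - x)))%:E.
Proof.
case/andP=> x0 x1 gc g0.
have [G0 G1 G2 G3] : [/\ forall t, [set` `[0%R, x]] t -> g t = g 0,
    forall t, [set` `]x, (1 / 2)%R]] t -> g t = g (1 / 2),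
    forall t, [set` `](1 / 2)%R, (1 - x)%R]] t -> g t = g (1 - x) &
    forall t, [set` `](1 - x)%R, 1%R]] t -> g t = g 1].
  by split=> t /=; rewrite in_itv /= => /andP[? ?]; apply: gc; apply/idP/idP => ?; lra.
have [le0x le0h le0x'] : [/\ 0 <= x, (0 : R) <= 1 / 2 & 0 <= 1 - x] by split; lra.
have [lex1 leh1 lex'1] : [/\ x <= 1, 1 / 2 <= (1 : R) & 1 - x <= 1] by split; lra.
have [mG0 IG0] := integral_density_step G0 (lexx _) lex1 (g0 _).
have [mG1 IG1] := integral_density_step G1 le0x leh1 (g0 _).
have [mG2 IG2] := integral_density_step G2 le0h lex'1 (g0 _).
have [mG3 IG3] := integral_density_step G3 le0x' (lexx _) (g0 _).
have h0h : 0 <= x <= 1 / 2 by rewrite le0x ltW.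
have hh1 : (0 : R) <= 1 / 2 <= 1 - x by apply/andP; split; lra.
have h11 : 0 <= 1 - x <= 1 by rewrite le0x' lex'1.
have mGh := measurable_fun_itv_split h0h mG0 mG1.
have mGx := measurable_fun_itv_split hh1 mGh mG2.
have mG := measurable_fun_itv_split h11 mGx mG3.
rewrite /EU (integral_itv_split h11 mG) (integral_itv_split hh1 mGx).
rewrite (integral_itv_split h0h mGh) IG0 IG1 IG2 IG3.
rewrite integral_density_cc ?le0x ?lex1 // !integral_density_oc ?cdf_one //; lra.
Qed.

Hypothesis sym : forall y : R, 0 <= y <= 1 -> F y = 1 - F (1 - y).

Lemma cdf_half : F (1 / 2) = 1 / 2.
Proof.
have half01 : 0 <= (1 / 2 : R) <= 1 by apply/andP; split; lra.
by have := sym half01; rewrite (_ : 1 - 1 / 2 = 1 / 2 :> R) => [?|]; lra.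
Qed.

(* the cutoff type x is characterized by x + F x = 1/2, i.e. the mass x of the
   moderate region ]x, 1/2] equals the cutoff; it exists by continuity of F *)
Lemma exists_cutoff : exists x : R, [/\ 0 < x, x < 1 / 2 & x + F x = 1 / 2].
Proof.
have intf : mu.-integrable `[0%R, 1%R] (EFin \o f).
  apply/integrableP; split; first exact/measurable_EFinP.
  rewrite (_ : (\int[mu]_(x in _) `|(EFin \o f) x|)%E = 1%E) ?ltey //.
  rewrite -f1; apply: eq_integral => t; rewrite inE /= in_itv /= => t01.
  by rewrite ger0_norm //; apply/ltW/fpos.
have half0 : (0 : R) <= 1 / 2 by lra.
have inth : mu.-integrable `[0%R, (1 / 2)%R] (EFin \o f).
  apply: integrableS intf => //.
  by apply: subset_itvScc; rewrite bnd_simp; lra.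
pose H y := y + F y.
have cH : {within `[0%R, (1 / 2)%R], continuous H}.
  move=> y; apply: continuousD; last exact: parameterized_integral_continuous.
  by apply: continuous_subspaceT => z; exact: cvg_id.
have H0 : H 0 = 0 by rewrite /H /density_cdf set_itv1 integral_set1 addr0.
have H1 : H (1 / 2) = 1 by rewrite /H cdf_half; lra.
have [|c] := IVT half0 cH (v := 1 / 2).
  by rewrite H0 H1 ge_min le_max; apply/andP; split; apply/orP; [left|right]; lra.
rewrite in_itv /= => /andP[c0 c1] Hc.
exists c; split => //; rewrite lt_neqAle ?c0 ?c1 andbT; apply/eqP.
- by move=> c_end; move: Hc; rewrite -c_end H0; lra.
- by move=> c_end; move: Hc; rewrite c_end H1; lra.
Qed.

Lemma EU_region_avg (x : R) (g : R -> R) : 0 < x < 1 / 2 -> x + F x = 1 / 2 ->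
  region_const x g -> (forall v, 0 <= g v) -> EU f g = (region_avg x g)%:E.
Proof.
move=> x01 cut gc g0; rewrite (EU_regions x01 gc g0) cdf_half.
have /andP[x0 x1] := x01.
have x01' : 0 <= 1 - x <= 1 by apply/andP; split; lra.
rewrite (sym x01') (_ : 1 - (1 - x) = x); last by lra.
rewrite (_ : F x = 1 / 2 - x); last by lra.
by congr EFin; rewrite /region_avg; lra.
Qed.

End Density.

Lemma pay_le_max (R : realType) (u : R) (a b : bool) : 0 <= u <= 1 ->
  pay u a b <= Num.max (1 - u) u.
Proof. by case/andP=> u0 u1; rewrite /pay le_max; case: a; case: b => /=; lra. Qed.

Lemma pay_LR_le_max (R : realType) (u : R) (a : bool) : 0 <= u <= 1 ->
  pay u a true + pay u a false <= Num.max (1 - u) u.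
Proof. by case/andP=> u0 u1; rewrite /pay le_max; case: a => /=; lra. Qed.

Lemma pay_L_le (R : realType) (u : R) (a : bool) : u <= 1 -> pay u a true <= 1 - u.
Proof. by move=> u1; rewrite /pay; case: a => /=; lra. Qed.

Lemma pay_R_le (R : realType) (u : R) (a : bool) : 0 <= u -> pay u a false <= u.
Proof. by move=> u0; rewrite /pay; case: a => /=; lra. Qed.

(* against an opponent whose action is a fair coin flip, at most 1/2 on average *)
Lemma pay_coin_le (R : realType) (u : R) (a0 a1 q : bool) : 0 <= u <= 1 ->
  pay u a0 q + pay u a1 (~~ q) <= 1.
Proof. by case/andP=> u0 u1; rewrite /pay; case: a0; case: a1; case: q => /=; lra. Qed.

Lemma pay_ge0 (R : realType) (u : R) (a b : bool) : 0 <= u <= 1 -> 0 <= pay u a b.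
Proof. by case/andP=> u0 u1; rewrite /pay; case: a; case: b => /=; lra. Qed.

Lemma avg_ge0 (R : realType) (g : bool -> R) : (forall b, 0 <= g b) -> 0 <= avg g.
Proof. by move=> g0; rewrite /avg divr_ge0 ?addr_ge0. Qed.

Lemma max_compl_half (R : realType) (u : R) :
  Num.max (1 - u) u = if u <= 1 / 2 then 1 - u else u.
Proof. by case: leP => ?; [apply/max_idPl | apply/max_idPr]; lra. Qed.

Section Strategy.
Variables (R : realType) (M : finType) (e mL mR b0 b1 d : M).
Hypotheses (eL : e != mL) (eR : e != mR) (LR : mL != mR) (b01 : b0 != b1)
  (d_in : d \in [:: e; mL; mR]).
Variable x : R.
Hypothesis x01 : 0 < x < 1 / 2.

Local Notation sig1 := (sig1 x e mL mR).
Local Notation interp := (interp e mL mR d).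
Local Notation dev := (dev_outcome x e mL mR b0 b1 d).
Local Notation eqo := (eq_outcome x e mL mR b0 b1 d).

Lemma sig1_regions : [/\ sig1 0 = e, sig1 (1 / 2) = mL, sig1 (1 - x) = mR & sig1 1 = e].
Proof.
have /andP[x0 x1] := x01.
rewrite /sig1 (ltW x0) /=; split => //.
- by rewrite ifF ?lexx //; apply/negbTE; rewrite negb_or -!ltNge; apply/andP; split; lra.
- by rewrite ltxx orbF !ifF //; apply/negbTE; rewrite -ltNge; lra.
- by rewrite ifT //; apply/orP; right; lra.
Qed.

Lemma interp_in m : interp m \in [:: e; mL; mR].
Proof. by rewrite /interp; case: ifP. Qed.

Lemma interp_e : interp e = e. Proof. by rewrite /interp mem_head. Qed.
Lemma interp_L : interp mL = mL. Proof. by rewrite /interp !inE eqxx orbT. Qed.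
Lemma interp_R : interp mR = mR. Proof. by rewrite /interp !inE eqxx !orbT. Qed.

(* upper bound on the expected payoff of a type u whose round-1 message is
   read as m, when the opponent follows the strategy *)
Definition msg_value (u : R) (m : M) : R :=
  if m == e then (1 / 2 + x) * Num.max (1 - u) u
  else if m == mL then 1 / 2 - x + x * (1 - u) + x / 2
  else 1 / 2 - x + x * u + x / 2.

Lemma msg_neq : [/\ (e == mL) = false, (e == mR) = false, (mL == mR) = false,
  (mL == e) = false & (mR == e) = false /\ (mR == mL) = false].
Proof. by rewrite ![_ == e]eq_sym [mR == _]eq_sym !(negbTE eL, negbTE eR, negbTE LR). Qed.

Lemma half_facts : [/\ (0 : R) <= 1 / 2, (1 / 2 : R) <= 1 / 2, (1 <= 1 / 2 :> R) = false
  & (1 - x <= 1 / 2) = false].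
Proof.
have /andP[x0 x1] := x01.
by split; try lra; apply/negbTE; rewrite -ltNge; lra.
Qed.

(* a deviation earns at most the value of the message it is read as sending:
   against the extreme types it faces actions it cannot influence, against the
   moderate types it coordinates at best on its preferred action (after e) or
   faces a fair coin (after a moderate message of the other side) *)
Lemma dev_value_le u m1 r2 act : 0 <= u <= 1 ->
  region_avg x (dev u m1 r2 act) <= msg_value u (interp m1).
Proof.
move=> u01; have /andP[x0 x1] := x01; have /andP[u0 u1] := u01.
have [s0 sh sx s1] := sig1_regions; have [h0 hh h1 hx] := half_facts.
have [eL' eR' LR' Le [Re RL]] := msg_neq.
have := interp_in m1; rewrite !inE => /or3P[] /eqP me;
  rewrite /region_avg /dev_outcome s0 sh sx s1 me /sig2 /sigA /avg /msg_value;
  rewrite !eqxx ?(h0, hh, h1, hx, eL', eR', LR', Le, Re, RL) /=.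
- have := pay_LR_le_max (act e (r2 e) e) u01.
  have := pay_le_max (act mL (r2 mL) mL) (r2 mL == mL) u01.
  have := pay_le_max (act mR (r2 mR) mR) (r2 mR != mR) u01.
  by nra.
- have := pay_L_le (act e (r2 e) mL) u1; have := pay_R_le (act e (r2 e) mR) u0.
  have := pay_L_le (act mL (r2 mL) mL) u1.
  have := pay_coin_le (act mR (r2 mR) b0) (act mR (r2 mR) b1) (r2 mR == b1) u01.
  by nra.
- have := pay_L_le (act e (r2 e) mL) u1; have := pay_R_le (act e (r2 e) mR) u0.
  have := pay_coin_le (act mL (r2 mL) b0) (act mL (r2 mL) b1) (r2 mL == b1) u01.
  have := pay_R_le (act mR (r2 mR) mR) u0.
  by nra.
Qed.

Lemma sig1_region u : 0 <= u <= 1 ->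
  sig1 u = if u <= x then e else if u <= 1 / 2 then mL else if u <= 1 - x then mR else e.
Proof.
case/andP=> u0 u1; have /andP[x0 x1] := x01; rewrite /sig1.
by case: (leP u x) => ux //=; case: (leP u (1 - x)) => ux'; case: (leP u (1 / 2)) => uh //=; exfalso; lra.
Qed.

(* following the strategy, a type earns exactly the value of its own message:
   it coordinates on its preferred action whenever it sends e, and otherwise
   obtains the coordination described by msg_value *)
Lemma eq_value u : 0 <= u <= 1 -> region_avg x (eqo u) = msg_value u (sig1 u).
Proof.
move=> u01; have /andP[x0 x1] := x01; have /andP[u0 u1] := u01.
have [s0 sh sx s1] := sig1_regions; have [h0 hh h1 hx] := half_facts.
have [eL' eR' LR' Le [Re RL]] := msg_neq.
rewrite /region_avg /eq_outcome s0 sh sx s1 sig1_region // /sig2 /sigA /avg /msg_value.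
rewrite max_compl_half.
case: (leP u x) => ux; case: (leP u (1 / 2)) => uh; case: (leP u (1 - x)) => ux';
  try (exfalso; lra).
all: rewrite ?interp_e ?interp_L ?interp_R.
all: rewrite ?(eqxx, h0, hh, h1, hx, eL', eR', LR', Le, Re, RL, negbTE b01) /= /pay /=.
all: rewrite ?eqxx /=; lra.
Qed.

(* each type's own round-1 message has the highest value: this is where the
   cutoff x separates extreme from moderate types *)
Lemma sig1_optimal u m : 0 <= u <= 1 -> msg_value u m <= msg_value u (sig1 u).
Proof.
move=> u01; have /andP[x0 x1] := x01; have /andP[u0 u1] := u01.
have [eL' eR' LR' Le [Re RL]] := msg_neq.
rewrite sig1_region // /msg_value max_compl_half.
case: (leP u x) => ux; case: (leP u (1 / 2)) => uh; case: (leP u (1 - x)) => ux';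
  try (exfalso; lra).
all: rewrite ?eqxx ?(eL', eR', LR', Le, Re, RL) /=.
all: by case: ifP => _; [|case: ifP => _]; nra.
Qed.

Lemma no_profitable_deviation u m1 r2 act : 0 <= u <= 1 ->
  region_avg x (dev u m1 r2 act) <= region_avg x (eqo u).
Proof.
move=> u01; rewrite eq_value //.
exact: le_trans (dev_value_le m1 r2 act u01) (sig1_optimal _ u01).
Qed.

End Strategy.

Lemma dev_region_const (R : realType) (M : finType) (x : R) (e mL mR b0 b1 d : M)
    u m1 r2 act : region_const x (dev_outcome x e mL mR b0 b1 d u m1 r2 act).
Proof. by move=> v w h1 h2 h3; rewrite /dev_outcome /sig1 /sig2 /sigA h1 h2 h3. Qed.

Lemma eq_region_const (R : realType) (M : finType) (x : R) (e mL mR b0 b1 d : M) u :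
  region_const x (eq_outcome x e mL mR b0 b1 d u).
Proof. by move=> v w h1 h2 h3; rewrite /eq_outcome /sig1 /sig2 /sigA h1 h2 h3. Qed.

Theorem mainTheorem10 (R : realType) (M : finType) (f : R -> R) :
  measurable_fun (`[0%R, 1%R] : set R) f ->
  (forall t : R, 0 <= t <= 1 -> 0 < f t) ->
  (\int[@lebesgue_measure R]_(t in `[0%R, 1%R]) (f t)%:E)%E = 1%E ->
  (forall y : R, 0 <= y <= 1 -> density_cdf f y = 1 - density_cdf f (1 - y)) ->
  (4 <= #|M|)%N ->
  forall e mL mR b0 b1 d : M,
    e != mL -> e != mR -> mL != mR -> b0 != b1 ->
    d \in [:: e; mL; mR] ->
  exists x : R, 0 < x < 1 / 2 /\ sigma_ex_BNE f x e mL mR b0 b1 d.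
Proof.
move=> mf fpos f1 sym _ e mL mR b0 b1 d eL eR LR b01 d_in.
have [x [x0 x1 cut]] := exists_cutoff mf fpos f1 sym.
have x01 : 0 < x < 1 / 2 by rewrite x0 x1.
exists x; split => // u u01 m1 r2 act.
have EUavg := EU_region_avg mf fpos f1 sym x01 cut.
have dev0 v : 0 <= dev_outcome x e mL mR b0 b1 d u m1 r2 act v.
  by apply: avg_ge0 => r; apply: pay_ge0.
have eq0 v : 0 <= eq_outcome x e mL mR b0 b1 d u v.
  by apply: avg_ge0 => r; apply: avg_ge0 => r'; apply: pay_ge0.
rewrite (EUavg _ (@dev_region_const R M x e mL mR b0 b1 d u m1 r2 act) dev0).
rewrite (EUavg _ (@eq_region_const R M x e mL mR b0 b1 d u) eq0) lee_fin.
by apply: no_profitable_deviation.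
Qed.
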